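(* Let $M_n$ be the $n$-th Motzkin number. Then, as Laurent series in $z$, $$\sum_{n\ge0}M_nz^n=13z^{-1}+14z^{-2}+\left(9z+12+24z^{-1}+21z^{-2}\right)\Psi(z^3)+\left(9z^5+12z^4+10z^3+23z^2+25z+19+14z^{-1}+4z^{-2}\right)\Psi^3(z^3)$$ $$-\left(9z^7+3z^6+24z^5+30z^4+6z^3+21z^2+6z+3+24z^{-1}+12z^{-2}\right)\Psi^5(z^3)\quad\text{modulo }27.$$
   Context: $M_n$ is the number of lattice paths from $(0,0)$ to $(n,0)$ with steps $(1,0),(1,1),(1,-1)$ never going below the $x$-axis; equivalently $\sum_n M_nz^n=\frac{1-z-\sqrt{1-2z-3z^2}}{2z^2}$. $\Psi(z)=\prod_{j\ge0}(1+z^{3^j})$. ''Modulo $27$'' means coefficientwise congruence of Laurent series. *)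

From mathcomp Require Import all_boot all_order all_algebra.
Set Implicit Arguments. Unset Strict Implicit. Unset Printing Implicit Defensive.
Import GRing.Theory.
Local Open Scope ring_scope.

(* Motzkin numbers via the recurrence equivalent to the generating-function
   equation M(z) = 1 + z M(z) + z^2 M(z)^2 :
   M_0 = 1,  M_{k+1} = M_k + \sum_{i<k} M_i M_{k-1-i}.
   mot_list n = [:: M_0; ...; M_n]. *)
Fixpoint mot_list (n : nat) : seq nat :=
  match n with
  | 0 => [:: 1%N]
  | k.+1 =>
      let s := mot_list k in
      rcons s (nth 0%N s k + \sum_(i < k) nth 0%N s i * nth 0%N s (k.-1 - i))%N
  end.

Definition motzkin (n : nat) : nat := nth 0%N (mot_list n) n.

(* Truncation of Psi(z) = \prod_{j>=0} (1 + z^(3^j)) to its first N factors,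
   as an integer polynomial.  Factors with j >= N only involve powers
   z^(3^N) and higher, so coefficients of degree < 3^N are exact. *)
Definition psi_trunc (N : nat) : {poly int} := \prod_(j < N) (1 + 'X^(3 ^ j)).

Definition psi3_trunc (N : nat) : {poly int} := psi_trunc N \Po 'X^3.

(* z^2 times the right-hand side, with Psi(z^3) replaced by its truncation
   psi3_trunc N; this is an honest polynomial in z. *)
Definition rhs_z2 (N : nat) : {poly int} :=
  let P := psi3_trunc N in
  13%:P * 'X + 14%:P
  + (9%:P * 'X^3 + 12%:P * 'X^2 + 24%:P * 'X + 21%:P) * P
  + (9%:P * 'X^7 + 12%:P * 'X^6 + 10%:P * 'X^5 + 23%:P * 'X^4 + 25%:P * 'X^3
     + 19%:P * 'X^2 + 14%:P * 'X + 4%:P) * P ^+ 3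
  - (9%:P * 'X^9 + 3%:P * 'X^8 + 24%:P * 'X^7 + 30%:P * 'X^6 + 6%:P * 'X^5
     + 21%:P * 'X^4 + 6%:P * 'X^3 + 3%:P * 'X^2 + 24%:P * 'X + 12%:P) * P ^+ 5.

(* Coefficient of z^n in z^2 * \sum_k M_k z^k. *)
Definition motzkin_z2 (n : nat) : nat :=
  match n with 0 | 1 => 0%N | k.+2 => motzkin k end.

From mathcomp Require Import all_boot all_order all_algebra.
From mathcomp Require Import ring zify.
Set Implicit Arguments. Unset Strict Implicit. Unset Printing Implicit Defensive.
Import GRing.Theory.
Local Open Scope ring_scope.

(* Write F = z^2 M(z); the functional equation M = 1 + z M + z^2 M^2 says that
   F is the root with F(0) = 0 of Q(z, y) = y^2 + (z - 1) y + z^2.  Put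
   phi = Psi(z^3) (truncated to N factors, exact below degree 3^(N+1)) and
   let G = z^2 * RHS, a polynomial in z and phi.  The argument is:
   1. Frobenius: Psi(z)^3 = Psi(z^3) mod 3 and Psi(z) = (1 + z) Psi(z^3), so
      E := (1 + z)^3 phi^3 - phi is 3 s + z^(3^(N+1)) phi for some s.
   2. An explicit polynomial identity (a certificate, checked by 'ring') puts
      (1 + z)^15 phi^3 Q(z, G) into the ideal (3, E)^3.  With step 1 this
      ideal lies in (27, z^(3^(N+1))), so over Z/27 the product vanishes
      below degree 3^(N+1).
   3. Q has the simple root F: if Q(z, F) and u Q(z, G) vanish below degree
      m, with u(0) a unit and F(0) = G(0) = 0, then F and G agree below m,
      because Q(z, G) - Q(z, F) = (G - F)(G + F + z - 1).
   Comparing coefficients in Z/27 and lifting back to integers gives the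
   theorem. *)

Definition vanishes_below (R : nzSemiRingType) (m : nat) (p : {poly R}) : Prop :=
  forall i, (i < m)%N -> p`_i = 0.

Lemma vanishes_below_sub (R : nzRingType) m (p q : {poly R}) :
  vanishes_below m p -> vanishes_below m q -> vanishes_below m (p - q).
Proof. by move=> hp hq i im; rewrite coefB hp // hq // subr0. Qed.

Lemma vanishes_below_lmul (R : nzSemiRingType) m (p q : {poly R}) :
  vanishes_below m p -> vanishes_below m (q * p).
Proof.
move=> hp i im; rewrite coefM big1 // => j _.
by rewrite hp ?mulr0 // (leq_ltn_trans (leq_subr j i)).
Qed.

Lemma vanishes_below_Xn (R : nzSemiRingType) m (p : {poly R}) :
  vanishes_below m ('X^m * p).
Proof. by move=> i im; rewrite coefXnM im. Qed.

Lemma vanishes_below_cancel (R : unitRingType) m (a b : {poly R}) :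
  b`_0 \is a GRing.unit -> vanishes_below m (a * b) -> vanishes_below m a.
Proof.
move=> b0U hab; elim/ltn_ind=> i IH im.
have := hab i im; rewrite coefM big_ord_recr /= subnn big1 ?add0r.
  by move/(canRL (mulrK b0U)); rewrite mul0r.
by move=> j _; rewrite IH ?mul0r ?(ltn_trans _ im).
Qed.

(* The quadratic Q(x, y) = y^2 + (x - 1) y + x^2 satisfied by y = x^2 M(x). *)
Definition mquad (R : nzRingType) (x y : R) : R := y ^+ 2 + (x - 1) * y + x ^+ 2.

Lemma mquad_root_unique (R : comUnitRingType) m (u F G : {poly R}) :
  vanishes_below m (mquad 'X F) -> vanishes_below m (u * mquad 'X G) ->
  u`_0 \is a GRing.unit -> F`_0 = 0 -> G`_0 = 0 ->
  forall i, (i < m)%N -> G`_i = F`_i.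
Proof.
move=> hF hG u0U F0 G0 i im; apply/eqP; rewrite -subr_eq0 -coefB; apply/eqP.
apply: (vanishes_below_cancel (b := u * (G + F + 'X - 1))) im.
  by rewrite coef0M unitrM u0U !coefE F0 G0 /= !add0r unitrN unitr1.
have -> : (G - F) * (u * (G + F + 'X - 1)) = u * mquad 'X G - u * mquad 'X F.
  by rewrite /mquad; ring.
by apply: vanishes_below_sub => //; apply: vanishes_below_lmul.
Qed.

Lemma size_mot_list n : size (mot_list n) = n.+1.
Proof. by elim: n => //= n IH; rewrite size_rcons IH. Qed.

Lemma nth_mot_list n i : (i <= n)%N -> nth 0%N (mot_list n) i = motzkin i.
Proof.
elim: n => [|n IH]; first by rewrite leqn0 => /eqP ->.
rewrite leq_eqVlt => /orP[/eqP -> // | ltin].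
by rewrite /= nth_rcons size_mot_list ltin IH.
Qed.

Lemma motzkinS k :
  motzkin k.+1 = (motzkin k + \sum_(i < k) motzkin i * motzkin (k.-1 - i))%N.
Proof.
rewrite /motzkin [mot_list k.+1]/= nth_rcons size_mot_list ltnn eqxx.
congr (_ + _)%N; apply: eq_bigr => i _.
by rewrite !nth_mot_list //; have := ltn_ord i; lia.
Qed.

(* The recurrence for the coefficients f_i of F = z^2 M(z), in the shape of
   the coefficient of z^i in F = z^2 + z F + F^2. *)
Lemma motzkin_z2_conv i :
  motzkin_z2 i = ((i == 2) + motzkin_z2 i.-1
                  + \sum_(j < i.+1) motzkin_z2 j * motzkin_z2 (i - j))%N.
Proof.
case: i => [|[|[|k]]]; try by rewrite !big_ord_recr big_ord0.
rewrite 2!big_ord_recl 2!big_ord_recr !lift0 /= !subSS subnn subSnn /=.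
rewrite !mul0n !muln0 !add0n !addn0 motzkinS; congr (_ + _)%N.
apply: eq_bigr => j _; have jk := ltn_ord j.
have -> : (k.+3 - bump 0 (bump 0 j) = (k.-1 - j).+2)%N by rewrite /bump; lia.
by rewrite add0n.
Qed.

Lemma motzkin_quad (R : comNzRingType) m :
  vanishes_below m (mquad 'X (\poly_(i < m) ((motzkin_z2 i)%:R : R))).
Proof.
set F := \poly_(i < m) _ => i im.
have Fi j : (j <= i)%N -> F`_j = (motzkin_z2 j)%:R.
  by move=> ji; rewrite coef_poly (leq_ltn_trans ji im).
rewrite /mquad mulrBl mul1r !coefE coefM im (leq_ltn_trans (leq_pred i) im).
rewrite (eq_bigr (fun j : 'I_i.+1 => (motzkin_z2 j * motzkin_z2 (i - j))%:R)); last first.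
  by move=> j _; rewrite !Fi ?natrM ?leq_subr // -ltnS.
rewrite -natr_sum (motzkin_z2_conv i) !natrD.
by case: i {im Fi} => [|[|[|i]]] /=; ring.
Qed.

Definition psi3 (R : comNzRingType) (N : nat) : {poly R} :=
  \prod_(j < N) (1 + 'X^(3 ^ j.+1)).

Lemma psi3_truncE N : psi3_trunc N = psi3 int N.
Proof.
rewrite /psi3_trunc /psi_trunc rmorph_prod; apply: eq_bigr => j _.
by rewrite rmorphD rmorph1 /= comp_Xn_poly -exprM -expnS.
Qed.

Lemma map_psi3 (R S : comNzRingType) (f : {rmorphism R -> S}) N :
  map_poly f (psi3 R N) = psi3 S N.
Proof.
rewrite rmorph_prod; apply: eq_bigr => j _.
by rewrite rmorphD rmorph1 rmorphXn /= map_polyX.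
Qed.

Lemma psi3_at0 (R : comNzRingType) N : (psi3 R N).[0] = 1.
Proof.
rewrite horner_prod big1 // => j _.
by rewrite hornerD hornerXn hornerC expr0n expn_eq0 /= addr0.
Qed.

Lemma prod_cube_mod3 (R : comNzRingType) N (g : nat -> R) : exists s,
  (\prod_(j < N) (1 + g j)) ^+ 3 = \prod_(j < N) (1 + g j ^+ 3) + 3%:R * s.
Proof.
elim: N => [|N [s IH]]; first by exists 0; rewrite !big_ord0 expr1n mulr0 addr0.
rewrite !big_ord_recr /= exprMn IH; set P := \prod_(j < N) _.
by exists (s * (1 + g N) ^+ 3 + P * (g N + g N ^+ 2)); ring.
Qed.

(* Step 1: (1 + z)^3 phi^3 - phi = z^(3^(N+1)) phi modulo 3, since
   (1 + z) phi = Psi(z) and Psi(z)^3 = Psi(z^3) mod 3. *)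
Lemma psi3_frobenius (R : comNzRingType) N : exists s,
  (1 + 'X) ^+ 3 * psi3 R N ^+ 3 - psi3 R N = 3%:R * s + 'X^(3 ^ N.+1) * psi3 R N.
Proof.
have [s hs] := prod_cube_mod3 N.+1 (fun j => 'X^(3 ^ j) : {poly R}).
exists s; move: hs; rewrite big_ord_recl big_ord_recr /= -exprM -expnSr.
under [in X in _ = X + _]eq_bigr do rewrite -exprM -expnSr.
rewrite -/(psi3 R N) expn0 expr1 exprMn => ->; ring.
Qed.

Definition rhs_form (R : comNzRingType) (x f : R) : R :=
  13%:R * x + 14%:R
  + (9%:R * x ^+ 3 + 12%:R * x ^+ 2 + 24%:R * x + 21%:R) * f
  + (9%:R * x ^+ 7 + 12%:R * x ^+ 6 + 10%:R * x ^+ 5 + 23%:R * x ^+ 4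
     + 25%:R * x ^+ 3 + 19%:R * x ^+ 2 + 14%:R * x + 4%:R) * f ^+ 3
  - (9%:R * x ^+ 9 + 3%:R * x ^+ 8 + 24%:R * x ^+ 7 + 30%:R * x ^+ 6
     + 6%:R * x ^+ 5 + 21%:R * x ^+ 4 + 6%:R * x ^+ 3 + 3%:R * x ^+ 2
     + 24%:R * x + 12%:R) * f ^+ 5.

Lemma rhs_z2E N : rhs_z2 N = rhs_form 'X (psi3 int N).
Proof. by rewrite -psi3_truncE /rhs_z2 /rhs_form !polyC_natr; reflexivity. Qed.

Lemma rmorph_rhs_form (R S : comNzRingType) (h : {rmorphism R -> S}) (x f : R) :
  h (rhs_form x f) = rhs_form (h x) (h f).
Proof. by rewrite /rhs_form !(rmorph_nat, rmorphB, rmorphD, rmorphM, rmorphXn). Qed.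

(* The constant term of z^2 * RHS is 14 + 21 + 4 - 12 = 27. *)
Lemma rhs_form_coef0 (R : comNzRingType) N :
  (rhs_form 'X (psi3 R N))`_0 = 27%:R.
Proof.
rewrite -horner_coef0 -horner_evalE rmorph_rhs_form /= !horner_evalE.
by rewrite hornerX psi3_at0 /rhs_form; ring.
Qed.

Lemma cert_weight_coef0 (R : comNzRingType) N :
  ((1 + 'X) ^+ 15 * psi3 R N ^+ 3)`_0 = 1.
Proof.
rewrite -horner_coef0 hornerM !horner_exp hornerD hornerX psi3_at0.
by rewrite -polyC1 hornerC addr0 !expr1n mulr1.
Qed.

(* Step 2.  The certificate: polynomials in x making
   (1 + x)^15 f^3 Q(x, G) an explicit element of (3, E)^3, where
   E = (1 + x)^3 f^3 - f = f T.  They were found by computer algebra. *)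
Section Certificate.
Variables (R : comNzRingType) (x : R).

Definition cert_a0 : R :=
  13%:R + 261%:R * x + 2294%:R * x ^+ 2 + 11626%:R * x ^+ 3
  + 39105%:R * x ^+ 4 + 95414%:R * x ^+ 5 + 178723%:R * x ^+ 6
  + 265688%:R * x ^+ 7 + 319305%:R * x ^+ 8 + 313708%:R * x ^+ 9
  + 253778%:R * x ^+ 10 + 169928%:R * x ^+ 11 + 94903%:R * x ^+ 12
  + 44778%:R * x ^+ 13 + 18161%:R * x ^+ 14 + 6502%:R * x ^+ 15
  + 2102%:R * x ^+ 16 + 603%:R * x ^+ 17 + 147%:R * x ^+ 18 + 26%:R * x ^+ 19
  + 3%:R * x ^+ 20.

Definition cert_a1 : R :=
  13%:R + 282%:R * x + 2646%:R * x ^+ 2 + 14793%:R * x ^+ 3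
  + 56322%:R * x ^+ 4 + 157149%:R * x ^+ 5 + 336480%:R * x ^+ 6
  + 570357%:R * x ^+ 7 + 782262%:R * x ^+ 8 + 881648%:R * x ^+ 9
  + 825693%:R * x ^+ 10 + 648144%:R * x ^+ 11 + 429711%:R * x ^+ 12
  + 242325%:R * x ^+ 13 + 116730%:R * x ^+ 14 + 47841%:R * x ^+ 15
  + 16371%:R * x ^+ 16 + 4500%:R * x ^+ 17 + 931%:R * x ^+ 18
  + 129%:R * x ^+ 19 + 9%:R * x ^+ 20.

Definition cert_b0 : R :=
  - 39%:R - 300%:R * x + 1176%:R * x ^+ 2 + 16698%:R * x ^+ 3
  + 71427%:R * x ^+ 4 + 183918%:R * x ^+ 5 + 341373%:R * x ^+ 6
  + 493908%:R * x ^+ 7 + 578247%:R * x ^+ 8 + 564120%:R * x ^+ 9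
  + 470616%:R * x ^+ 10 + 341754%:R * x ^+ 11 + 220251%:R * x ^+ 12
  + 127128%:R * x ^+ 13 + 64551%:R * x ^+ 14 + 28776%:R * x ^+ 15
  + 11256%:R * x ^+ 16 + 3714%:R * x ^+ 17 + 1029%:R * x ^+ 18
  + 198%:R * x ^+ 19 + 27%:R * x ^+ 20.

Definition cert_b1 : R :=
  - 60%:R - 666%:R * x - 3159%:R * x ^+ 2 - 7812%:R * x ^+ 3
  - 7614%:R * x ^+ 4 + 15093%:R * x ^+ 5 + 76941%:R * x ^+ 6
  + 172557%:R * x ^+ 7 + 269217%:R * x ^+ 8 + 327255%:R * x ^+ 9
  + 327393%:R * x ^+ 10 + 280935%:R * x ^+ 11 + 215451%:R * x ^+ 12
  + 151875%:R * x ^+ 13 + 97227%:R * x ^+ 14 + 53667%:R * x ^+ 15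
  + 24003%:R * x ^+ 16 + 8235%:R * x ^+ 17 + 2046%:R * x ^+ 18
  + 333%:R * x ^+ 19 + 27%:R * x ^+ 20.

Definition cert_c0 : R :=
  - 144%:R - 3348%:R * x - 16380%:R * x ^+ 2 - 32652%:R * x ^+ 3
  - 22005%:R * x ^+ 4 + 36846%:R * x ^+ 5 + 138438%:R * x ^+ 6
  + 249804%:R * x ^+ 7 + 314181%:R * x ^+ 8 + 315144%:R * x ^+ 9
  + 276615%:R * x ^+ 10 + 215604%:R * x ^+ 11 + 157860%:R * x ^+ 12
  + 109134%:R * x ^+ 13 + 63576%:R * x ^+ 14 + 32976%:R * x ^+ 15
  + 15633%:R * x ^+ 16 + 5976%:R * x ^+ 17 + 2061%:R * x ^+ 18
  + 432%:R * x ^+ 19 + 81%:R * x ^+ 20.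

Definition cert_c1 : R :=
  - 108%:R - 1296%:R * x - 7047%:R * x ^+ 2 - 23004%:R * x ^+ 3
  - 50544%:R * x ^+ 4 - 80190%:R * x ^+ 5 - 98577%:R * x ^+ 6
  - 104490%:R * x ^+ 7 - 110565%:R * x ^+ 8 - 126819%:R * x ^+ 9
  - 147906%:R * x ^+ 10 - 157221%:R * x ^+ 11 - 142074%:R * x ^+ 12
  - 105948%:R * x ^+ 13 - 64881%:R * x ^+ 14 - 32724%:R * x ^+ 15
  - 13365%:R * x ^+ 16 - 4131%:R * x ^+ 17 - 837%:R * x ^+ 18
  - 81%:R * x ^+ 19.

Definition cert_d0 : R :=
  568%:R - 1904%:R * x - 22986%:R * x ^+ 2 - 63844%:R * x ^+ 3
  - 94657%:R * x ^+ 4 - 106878%:R * x ^+ 5 - 101378%:R * x ^+ 6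
  - 80462%:R * x ^+ 7 - 92271%:R * x ^+ 8 - 121724%:R * x ^+ 9
  - 125213%:R * x ^+ 10 - 123390%:R * x ^+ 11 - 95740%:R * x ^+ 12
  - 54418%:R * x ^+ 13 - 34608%:R * x ^+ 14 - 15626%:R * x ^+ 15
  - 3611%:R * x ^+ 16 - 1164%:R * x ^+ 17 + 459%:R * x ^+ 18
  + 54%:R * x ^+ 19 + 81%:R * x ^+ 20.

Definition cert_d1 : R :=
  624%:R + 2064%:R * x + 216%:R * x ^+ 2 - 5340%:R * x ^+ 3
  - 7113%:R * x ^+ 4 - 9108%:R * x ^+ 5 - 11886%:R * x ^+ 6
  - 8430%:R * x ^+ 7 - 14049%:R * x ^+ 8 - 21786%:R * x ^+ 9
  - 18510%:R * x ^+ 10 - 20574%:R * x ^+ 11 - 17436%:R * x ^+ 12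
  - 9840%:R * x ^+ 13 - 9540%:R * x ^+ 14 - 5568%:R * x ^+ 15
  - 2409%:R * x ^+ 16 - 1710%:R * x ^+ 17 - 351%:R * x ^+ 18
  - 162%:R * x ^+ 19.

Definition cert_d2 : R :=
  144%:R + 576%:R * x + 648%:R * x ^+ 2 + 288%:R * x ^+ 3 + 801%:R * x ^+ 4
  + 1188%:R * x ^+ 5 + 1170%:R * x ^+ 6 + 2304%:R * x ^+ 7 + 1917%:R * x ^+ 8
  + 1116%:R * x ^+ 9 + 2034%:R * x ^+ 10 + 1458%:R * x ^+ 11
  + 1422%:R * x ^+ 12 + 1854%:R * x ^+ 13 + 864%:R * x ^+ 14
  + 684%:R * x ^+ 15 + 441%:R * x ^+ 16 + 54%:R * x ^+ 17 + 81%:R * x ^+ 18.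

Lemma rhs_form_certificate (f : R) :
  let T := (1 + x) ^+ 3 * f ^+ 2 - 1 in
  (1 + x) ^+ 15 * f ^+ 3 * mquad x (rhs_form x f) =
    27%:R * (f ^+ 3 * (cert_a0 + cert_a1 * f))
    + 9%:R * (f ^+ 2 * (cert_b0 + cert_b1 * f)) * (f * T)
    + 3%:R * (f * (cert_c0 + cert_c1 * f)) * (f * T) ^+ 2
    + (cert_d0 + cert_d1 * T + cert_d2 * T ^+ 2) * (f * T) ^+ 3.
Proof.
rewrite /= /mquad /rhs_form /cert_a0 /cert_a1 /cert_b0 /cert_b1.
by rewrite /cert_c0 /cert_c1 /cert_d0 /cert_d1 /cert_d2; ring.
Qed.

End Certificate.

Lemma cube_ideal_mod27 (R : comNzRingType) (a b c d s y : R) :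
  27%:R = 0 :> R -> exists H,
  27%:R * a + 9%:R * b * (3%:R * s + y) + 3%:R * c * (3%:R * s + y) ^+ 2
  + d * (3%:R * s + y) ^+ 3 = y * H.
Proof.
move=> char27; exists (9%:R * b + 3%:R * c * (6%:R * s + y)
                      + d * (27%:R * s ^+ 2 + 9%:R * s * y + y ^+ 2)).
rewrite -[RHS]add0r -(mul0r (a + b * s + c * s ^+ 2 + d * s ^+ 3)) -char27.
ring.
Qed.

Lemma rhs_form_quad_mod27 (R : comNzRingType) (x f s y : R) :
  27%:R = 0 :> R -> (1 + x) ^+ 3 * f ^+ 3 - f = 3%:R * s + y ->
  exists H, (1 + x) ^+ 15 * f ^+ 3 * mquad x (rhs_form x f) = y * H.
Proof.
move=> char27 hE; rewrite rhs_form_certificate /=.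
have -> : f * ((1 + x) ^+ 3 * f ^+ 2 - 1) = 3%:R * s + y by rewrite -hE; ring.
exact: cube_ideal_mod27.
Qed.

Lemma Zp_intr_eq0 d (c : int) : (1 < d)%N -> (c%:~R : 'Z_d) = 0 -> (d %| c)%Z.
Proof.
move=> d_gt1; have natr_eq0 k : (k%:R : 'Z_d) = 0 -> (d %| k)%N.
  by move/(congr1 (@nat_of_ord _)); rewrite val_Zp_nat // => /eqP.
case: c => k; first by rewrite -pmulrn => /natr_eq0.
by move=> h; apply: natr_eq0; apply/eqP; rewrite -oppr_eq0 pmulrn -intrN -NegzE h.
Qed.

Lemma Zp_intr_inj d (a b : int) : (1 < d)%N ->
  (a%:~R : 'Z_d) = b%:~R -> (a = b %[mod d])%Z.
Proof.
move=> d_gt1 eq_ab; apply/eqP; rewrite eqz_mod_dvd.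
by apply: Zp_intr_eq0 => //; rewrite intrB eq_ab subrr.
Qed.

(* The truncation with n.+1 factors is exact well beyond degree n. *)
Lemma ltn_pow3 n : (n < 3 ^ n.+2)%N.
Proof.
apply: leq_trans (ltn_expl n (isT : (1 < 3)%N)) _.
by rewrite leq_exp2l // ltnW.
Qed.

Theorem theorem7p2 (n : nat) :
  ((motzkin_z2 n)%:Z = (rhs_z2 n.+1)`_n %[mod 27])%Z.
Proof.
set phi := psi3 'Z_27 n.+1.
have char27 : 27%:R = 0 :> 'Z_27 by apply: pchar_Zp.
have GE : map_poly intr (rhs_z2 n.+1) = rhs_form 'X phi.
  by rewrite rhs_z2E rmorph_rhs_form /= map_polyX map_psi3.
have [s /rhs_form_quad_mod27 hQ] := psi3_frobenius 'Z_27 n.+1.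
have [|H hH] := hQ; first by rewrite -polyC_natr char27.
have hG : vanishes_below (3 ^ n.+2)
            ((1 + 'X) ^+ 15 * phi ^+ 3 * mquad 'X (rhs_form 'X phi)).
  by rewrite hH -mulrA; apply: vanishes_below_Xn.
have u0 : ((1 + 'X) ^+ 15 * phi ^+ 3)`_0 \is a GRing.unit.
  by rewrite cert_weight_coef0; exact: unitr1.
have G0 : (rhs_form 'X phi)`_0 = 0 by rewrite rhs_form_coef0 char27.
have F0 : (\poly_(i < 3 ^ n.+2) (motzkin_z2 i)%:R : {poly 'Z_27})`_0 = 0.
  by rewrite coef_poly expn_gt0.
have := mquad_root_unique (@motzkin_quad _ _) hG u0 F0 G0 (ltn_pow3 n).
by rewrite -GE coef_map coef_poly ltn_pow3 /= pmulrn => /Zp_intr_inj ->.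
Qed.
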